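(* Let $D$ be a delta-matroid on $[n,\overline{n}]$. Then $$U_D(u,v-1)=\sum_{I\text{ independent in }D}u^{n-|I|}v^{a(I)}.$$
   Context: For a finite $E\subseteq\{1,2,3,\dots\}$ let $E\cup\overline{E}$ consist of $E$ and formal copies $\overline{i}$ ($i\in E$), with involution $a\mapsto\overline{a}$; $\overline{S}=\{\overline{a}:a\in S\}$; $[n,\overline{n}]$ denotes this for $E=[n]$. A subset is admissible if it contains at most one of $i,\overline{i}$ for each $i$; $\operatorname{AdS}_n$ is the set of admissible subsets of $[n,\overline{n}]$. In $\mathbb{R}^E$ set $e_{\overline{i}}=-e_i$, $e_S=\sum_{a\in S}e_a$. A delta-matroid on $E\cup\overline{E}$ is a nonempty collection $\mathcal{F}$ of admissible sets of size $|E|$ (feasible sets) such that $\operatorname{Conv}\{e_B:B\in\mathcal{F}\}$ has all edges parallel to some $e_i$ or $e_i\pm e_j$. Rank function: $g_D(S)=\max_{B\in\mathcal{F}}(|S\cap B|-|\overline{S}\cap B|)$. $U_D(u,v)=\sum_{S\in\operatorname{AdS}_n}u^{n-|S|}v^{(|S|-g_D(S))/2}$. An admissible $S$ is independent in $D$ if $g_D(S)=|S|$, equivalently if $S$ is contained in a feasible set. For $A\subseteq[n]$, the projection $D(A)$ is the delta-matroid on $([n]\setminus A)\cup\overline{([n]\setminus A)}$ with feasible sets $B\setminus(A\cup\overline{A})$, $B\in\mathcal{F}$. For $S$ admissible, $\underline{S}\subseteq[n]$ is its unsigned version (image under identifying $i$ with $\overline{i}$). Order $[n]$ by $1<2<\dots<n$.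 For a delta-matroid $D'$ on $E\cup\overline{E}$ and a feasible set $B$ of $D'$: $i\in E$ is $B$-orientable if $B\,\Delta\,\{i,\overline{i}\}$ is not feasible in $D'$; $i$ is $B$-active if it is $B$-orientable and there is no $j\in E$ with $j<i$ such that $B\,\Delta\,\{i,j,\overline{i},\overline{j}\}$ is feasible in $D'$. For $I$ independent in $D$, $I$ is a feasible set of $D([n]\setminus\underline{I})$, and $i\in\underline{I}$ is called $I$-active if $i$ is $I$-active in $D([n]\setminus\underline{I})$; $a(I)$ is the number of $I$-active elements of $\underline{I}$. *)

From HB Require Import structures.
From mathcomp Require Import all_boot all_order all_algebra.
From Stdlib Require Import Rdefinitions.
From mathcomp Require Import Rstruct.
Set Implicit Arguments. Unset Strict Implicit. Unset Printing Implicit Defensive.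
Import Order.TTheory GRing.Theory Num.Theory.
Local Open Scope ring_scope.

(* The ground set [n] = {1,..,n} is modelled by 'I_n (i : 'I_n stands for i+1,
   so the order 1<2<..<n is the order of 'I_n).  The signed element (i, true)
   stands for i and (i, false) for its formal copy \bar i. *)
Definition signed (n : nat) := ('I_n * bool)%type.

Definition sbar {n} (a : signed n) : signed n := (a.1, ~~ a.2).

Definition setbar {n} (S : {set signed n}) : {set signed n} := [set sbar a | a in S].

Definition admissible {n} (S : {set signed n}) : bool :=
  [forall i : 'I_n, ~~ (((i, true) \in S) && ((i, false) \in S))].

Definition under {n} (S : {set signed n}) : {set 'I_n} := [set a.1 | a in S].

Definition symd {T : finType} (A B : {set T}) : {set T} := (A :\: B) :|: (B :\: A).

Definition pairset {n} (i : 'I_n) : {set signed n} := [set (i, true); (i, false)].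

Definition evec {n} (S : {set signed n}) (i : 'I_n) : R :=
  ((i, true) \in S)%:R - ((i, false) \in S)%:R.

Definition dotR {n} (w : 'I_n -> R) (S : {set signed n}) : R :=
  \sum_(i < n) w i * evec S i.

(* [B1, B2] (B1 <> B2) is an edge of Conv{e_B : B in F}: some linear functional w
   attains its maximum over the polytope exactly on the segment [e_B1, e_B2], i.e. the
   feasible sets whose points maximise w are exactly B1 and B2 (all e_B are
   distinct vertices of the cube [-1,1]^n, no three of them collinear). *)
Definition is_edge {n} (F : {set {set signed n}}) (B1 B2 : {set signed n}) : Prop :=
  [/\ B1 \in F, B2 \in F, B1 != B2 &
   exists w : 'I_n -> R, forall C, C \in F ->
     ((forall C', C' \in F -> dotR w C' <= dotR w C) <-> (C = B1 \/ C = B2))].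

Definition parallel_ok {n} (v : 'I_n -> R) : Prop :=
  exists i : 'I_n, exists c : R,
    (forall k, v k = c * (k == i)%:R) \/
    exists j : 'I_n, j != i /\
      ((forall k, v k = c * ((k == i)%:R + (k == j)%:R)) \/
       (forall k, v k = c * ((k == i)%:R - (k == j)%:R))).

Definition is_delta_matroid {n} (F : {set {set signed n}}) : Prop :=
  [/\ F != set0,
      (forall B, B \in F -> admissible B /\ #|B| = n) &
      (forall B1 B2, is_edge F B1 B2 -> parallel_ok (fun i => evec B1 i - evec B2 i))].

(* rank function g_D(S) = max_{B in F} (|S cap B| - |\bar S cap B|).  The seed
   -|S| of the max is a lower bound of every term, hence harmless since F <> set0. *)
Definition rankD {n} (F : {set {set signed n}}) (S : {set signed n}) : int :=
  \big[Num.max/ - (#|S|%:Z)]_(B in F) (#|S :&: B|%:Z - #|setbar S :&: B|%:Z).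

Definition U_D {n} (F : {set {set signed n}}) (Rg : comNzRingType) (u v : Rg) : Rg :=
  \sum_(S : {set signed n} | admissible S)
     u ^+ (n - #|S|) * v ^+ (divn (absz (#|S|%:Z - rankD F S)) 2).

Definition independent {n} (F : {set {set signed n}}) (S : {set signed n}) : bool :=
  admissible S && (rankD F S == #|S|%:Z).

Definition proj_feas {n} (F : {set {set signed n}}) (A : {set 'I_n}) : {set {set signed n}} :=
  [set B :\: [set a | a.1 \in A] | B in F].

Definition orientable {n} (F' : {set {set signed n}}) (B : {set signed n}) (i : 'I_n) : bool :=
  symd B (pairset i) \notin F'.

Definition active {n} (F' : {set {set signed n}}) (E : {set 'I_n}) (B : {set signed n})
    (i : 'I_n) : bool :=
  orientable F' B i &&
  [forall j : 'I_n, ((j \in E) && ltn j i) ==> (symd B (pairset i :|: pairset j) \notin F')].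

Definition activity {n} (F : {set {set signed n}}) (I : {set signed n}) : nat :=
  #|[set i in under I | active (proj_feas F (~: under I)) (under I) I i]|.

(* Every admissible S arises exactly once as I reoriented on A, with I independent and A a
   set of I-active elements: take a feasible B maximising sum_k 3^k e_S(k) e_B(k), let I be
   B restricted to the support of S and A the set where S and B disagree; maximality makes
   every element of A active.  Conversely, a feasible B maximises sum_k c_k e_S(k) e_B(k),
   for any positive nondecreasing c, as soon as all its disagreements with S are active.
   This is where the edge condition enters: by a steepest-edge argument, a non-optimal
   feasible set is improved by reorienting at most two coordinates.  With c_k = 3^k this
   gives uniqueness; with c = 1 it gives g_D(S) = |S| - 2|A|, whence
   U_D(u, v-1) = sum_I u^(n-|I|) sum_(A in act I) (v-1)^|A| = sum_I u^(n-|I|) v^a(I). *)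

From HB Require Import structures.
From mathcomp Require Import all_boot all_order all_algebra.
From mathcomp Require Import Rstruct.
From mathcomp Require Import zify.
Set Implicit Arguments. Unset Strict Implicit. Unset Printing Implicit Defensive.
Import Order.TTheory GRing.Theory Num.Theory.
Local Open Scope ring_scope.

Section Digits.
Variable b : nat.

Lemma digits_norm_lt m (d : 'I_m -> int) : (forall k, `|d k| < b%:Z) ->
  `|\sum_(k < m) Posz (b ^ k)%N * d k| < Posz (b ^ m)%N.
Proof.
elim: m d => [|m IH] d hd; first by rewrite big_ord0 expn0.
rewrite big_ord_recr /= expnS PoszM.
have := IH (fun k => d (widen_ord (leqnSn m) k)) (fun k => hd _).
have := hd ord_max; move: (\sum_(i < m) _) (d ord_max) (Posz (b ^ m)%N) => s x p.
rewrite !ltr_norml => /andP [? ?] /andP [? ?]; apply/andP; split; nia.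
Qed.

Lemma digits_eq0 m (d : 'I_m -> int) : (forall k, `|d k| < b%:Z) ->
  \sum_(k < m) Posz (b ^ k)%N * d k = 0 -> forall k, d k = 0.
Proof.
elim: m d => [|m IH] d hd; first by move=> _ [].
rewrite big_ord_recr /= => s0.
have bm : 0 < Posz (b ^ m)%N by rewrite ltz_nat expn_gt0; case: b hd {s0} => // /(_ ord_max).
have top : d ord_max = 0.
  have := digits_norm_lt (d := fun k => d (widen_ord (leqnSn m) k)) (fun k => hd _).
  move: s0 bm; move: (\sum_(i < m) _) (d ord_max) (Posz (b ^ m)%N) => s x p.
  rewrite ltr_norml; nia.
move: s0; rewrite top mulr0 addr0 => /IH h k.
case: (unliftP ord_max k) => [j ->|->] //.
have -> : lift ord_max j = widen_ord (leqnSn m) j.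
  by apply: val_inj; rewrite /= /bump leqNgt ltn_ord.
exact: h.
Qed.
End Digits.

Lemma in_symd (T : finType) (X Y : {set T}) a : (a \in symd X Y) = (a \in X) (+) (a \in Y).
Proof. by rewrite !inE; case: (a \in X); case: (a \in Y). Qed.

Lemma big_set2 (T : finType) (f : T -> int) k l :
  \sum_(x in [set k; l]) f x = if k == l then f k else f k + f l.
Proof.
case: eqVneq => [<-|kl]; first by rewrite setUid big_set1.
by rewrite big_setU1 /= ?big_set1 // inE.
Qed.

Lemma subset_set2 (T : finType) (D : {set T}) i j :
  D \subset [set i; j] -> D != set0 -> exists k l, D = [set k; l].
Proof.
move=> sD /set0Pn [x xD].
have [iD | iD] := boolP (i \in D); have [jD | jD] := boolP (j \in D).
- by exists i, j; apply/eqP; rewrite eqEsubset sD subUset !sub1set iD jD.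
- exists i, i; apply/setP => y; rewrite setUid inE; apply/idP/eqP => [yD|-> //].
  by move: (subsetP sD y yD); rewrite !inE => /orP [/eqP // | /eqP yj]; rewrite -yj yD in jD.
- exists j, j; apply/setP => y; rewrite setUid inE; apply/idP/eqP => [yD|-> //].
  by move: (subsetP sD y yD); rewrite !inE => /orP [/eqP yi | /eqP //]; rewrite -yi yD in iD.
- move: (subsetP sD x xD); rewrite !inE => /orP [] /eqP xe;
    [move: iD | move: jD]; by rewrite -xe xD.
Qed.

Lemma exprD1_subsets (T : finType) (X : {set T}) (Rg : comNzRingType) (x : Rg) :
  (x + 1) ^+ #|X| = \sum_(A : {set T} | A \subset X) x ^+ #|A|.
Proof.
rewrite -prodr_const big_mkcond /=.
rewrite (eq_bigr (fun i => (if i \in X then x else 0) + 1)); last first.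
  by move=> i _; case: (i \in X); rewrite ?add0r.
rewrite bigA_distr /= [RHS]big_mkcond /=; apply: eq_bigr => J _.
have [sJX | /subsetPn [i iJ iX]] := boolP (J \subset X).
  rewrite -prodr_const [RHS]big_mkcond /=; apply: eq_bigr => i _.
  by case: (boolP (i \in J)) => // iJ; rewrite (subsetP sJX _ iJ).
by rewrite (bigD1 i) //= iJ (negbTE iX) mul0r.
Qed.

Lemma lex_ge (K q q0 s s0 : int) : q <= q0 -> s <= s0 -> s0 - s < K ->
  (K * q0 + s0 <= K * q + s) = (q == q0) && (s == s0).
Proof.
move=> qq ss sK; apply/idP/andP => [h | [/eqP -> /eqP ->] //].
have qe : q = q0 by nia.
by move: h; rewrite qe lerD2l => h; split; apply/eqP; [|apply/le_anti/andP].
Qed.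

Lemma ler_ratio (R : numFieldType) (a b c d : int) : 0 < b -> 0 < d ->
  (a%:~R / b%:~R <= c%:~R / d%:~R :> R) = (a * d <= c * b).
Proof.
move=> b0 d0; rewrite ler_pdivrMr ?ltr0z // mulrAC ler_pdivlMr ?ltr0z //.
by rewrite -!rmorphM /= ler_int.
Qed.

Lemma card_sumz (T : finType) (A : {set T}) : #|A|%:Z = \sum_i (i \in A)%:Z.
Proof.
rewrite (eq_bigr (fun i => if i \in A then 1 else 0)) => [|i _]; last by case: (i \in A).
by rewrite -big_mkcond /= sumr_const natz.
Qed.

Section SignedSets.
Variable n : nat.
Implicit Types (X Y S B C I : {set signed n}) (A D E : {set 'I_n}) (w : 'I_n -> int).

Definition transversal X := forall i : 'I_n, ((i, false) \in X) = ~~ ((i, true) \in X).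

Definition sgn X i : int := ((i, true) \in X)%:Z - ((i, false) \in X)%:Z.

Definition lin w X : int := \sum_i w i * sgn X i.

Definition pairsets D : {set signed n} := [set a | a.1 \in D].

Definition reorient X D : {set signed n} :=
  [set a | if a.1 \in D then sbar a \in X else a \in X].

Definition restr E X : {set signed n} := X :&: pairsets E.

Definition disagree S B : {set 'I_n} := [set k | sgn S k * sgn B k == -1].

Lemma in_under X k : (k \in under X) = ((k, true) \in X) || ((k, false) \in X).
Proof.
apply/imsetP/idP => [[[i b] ab /= ->]|]; first by case: b ab => ->; rewrite ?orbT.
by case/orP => h; [exists (k, true) | exists (k, false)].
Qed.

Lemma in_setbar X k b : ((k, b) \in setbar X) = ((k, ~~ b) \in X).
Proof.
have sbarK : involutive (@sbar n) by case=> i c; rewrite /sbar /= negbK.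
by rewrite /setbar (can2_imset_pre _ sbarK sbarK) inE.
Qed.

Lemma in_pairsets D a : (a \in pairsets D) = (a.1 \in D).
Proof. by rewrite inE. Qed.

Lemma pairset1 k : pairset k = pairsets [set k].
Proof. by apply/setP => -[i []]; rewrite !inE ?xpair_eqE ?andbT ?andbF ?orbF. Qed.

Lemma pairsetU k l : pairset k :|: pairset l = pairsets [set k; l].
Proof. by rewrite !pairset1; apply/setP => a; rewrite !inE. Qed.

Lemma in_reorient X D k b :
  ((k, b) \in reorient X D) = ((k, if k \in D then ~~ b else b) \in X).
Proof. by rewrite inE /sbar /=; case: (k \in D). Qed.

Lemma in_restr E X k b : ((k, b) \in restr E X) = (k \in E) && ((k, b) \in X).
Proof. by rewrite !inE andbC. Qed.

Lemma sgn_reorient X D k : sgn (reorient X D) k = if k \in D then - sgn X k else sgn X k.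
Proof. by rewrite /sgn !in_reorient; case: (k \in D); rewrite //= opprB. Qed.

Lemma sgn_restr E X k : sgn (restr E X) k = if k \in E then sgn X k else 0.
Proof. by rewrite /sgn !in_restr; case: (k \in E); rewrite //= subrr. Qed.

Lemma sgn_out X k : k \notin under X -> sgn X k = 0.
Proof. by rewrite in_under negb_or /sgn => /andP [/negbTE -> /negbTE ->]. Qed.

Lemma under_reorient X D : under (reorient X D) = under X.
Proof. by apply/setP => k; rewrite !in_under !in_reorient; case: (k \in D); rewrite // orbC. Qed.

Lemma admissible_reorient X D : admissible X -> admissible (reorient X D).
Proof.
move=> /forallP aX; apply/forallP => k; rewrite !in_reorient.
by case: (k \in D); rewrite //= andbC.
Qed.

Lemma reorient_eq_in X D D' : {in under X, D =i D'} -> reorient X D = reorient X D'.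
Proof.
move=> eD; apply/setP => -[k b]; rewrite !in_reorient.
have [kX | ] := boolP (k \in under X); first by rewrite eD.
rewrite in_under negb_or => /andP [/negbTE k1 /negbTE k2].
by case: (k \in D); case: (k \in D'); case: b; rewrite ?k1 ?k2.
Qed.

Lemma reorient_set0 X : reorient X set0 = X.
Proof. by apply/setP => -[k b]; rewrite in_reorient inE. Qed.

Lemma restr_reorient E X D : restr E (reorient X D) = reorient (restr E X) D.
Proof. by apply/setP => -[k b]; rewrite in_restr !in_reorient in_restr. Qed.

Lemma symd_pairsets X D :
  admissible X -> D \subset under X -> symd X (pairsets D) = reorient X D.
Proof.
move=> /forallP aX /subsetP sD; apply/setP => -[k b].
rewrite in_symd in_pairsets in_reorient /=.
have [kD | _] := boolP (k \in D); last by rewrite addbF.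
have := sD k kD; have := aX k; rewrite in_under.
by case: b; case: ((k, true) \in X); case: ((k, false) \in X).
Qed.

Lemma card_signed X : #|X| = (\sum_i (((i, true) \in X) + ((i, false) \in X)))%N.
Proof.
rewrite -sum1_card big_mkcond /=.
rewrite (eq_bigr (fun a : signed n => (fun i b => ((i, b) \in X) : nat) a.1 a.2)); last first.
  by case=> i b _; case: ((i, b) \in X).
rewrite -(pair_big xpredT xpredT (fun i b => ((i, b) \in X) : nat)) /=.
by apply: eq_bigr => i _; rewrite big_bool.
Qed.

Lemma card_admissible X : admissible X -> #|X| = #|under X|.
Proof.
move=> /forallP aX; rewrite card_signed -sum1_card [RHS]big_mkcond /=; apply: eq_bigr => k _.
by rewrite in_under; have := aX k; case: ((k, true) \in X); case: ((k, false) \in X).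
Qed.

Lemma admissible_subset X Y : X \subset Y -> admissible Y -> admissible X.
Proof.
move=> /subsetP sXY /forallP aY; apply/forallP => k; apply: contra (aY k).
by case/andP => /sXY -> /sXY ->.
Qed.

Lemma transversal_admissible B : transversal B -> admissible B.
Proof. by move=> tB; apply/forallP => k; rewrite tB; case: ((k, true) \in B). Qed.

Lemma admissible_card_transversal B : admissible B -> #|B| = n -> transversal B.
Proof.
move=> aB cB k.
have uB : under B = setT.
  by apply/eqP; rewrite eqEcard subsetT cardsT card_ord -card_admissible // cB leqnn.
have := forallP aB k; have : k \in under B by rewrite uB inE.
by rewrite in_under; case: ((k, true) \in B); case: ((k, false) \in B).
Qed.

Lemma sgn_transversal B k : transversal B -> sgn B k = if (k, true) \in B then 1 else -1.
Proof. by move=> tB; rewrite /sgn tB; case: ((k, true) \in B). Qed.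

Lemma transversal_mem B C k b : transversal B -> transversal C ->
  sgn B k = sgn C k -> ((k, b) \in B) = ((k, b) \in C).
Proof.
move=> tB tC; rewrite !sgn_transversal //; case: b; rewrite ?tB ?tC;
by case: ((k, true) \in B); case: ((k, true) \in C).
Qed.

Lemma disagree_sub S B : disagree S B \subset under S.
Proof.
apply/subsetP => k; rewrite inE; apply: contraLR => /sgn_out ->.
by rewrite mul0r eq_sym oppr_eq0.
Qed.

Lemma sgn_mulE S B k : admissible S -> transversal B ->
  sgn S k * sgn B k = (k \in under S)%:Z - 2 * (k \in disagree S B)%:Z.
Proof.
move=> /forallP aS tB; rewrite inE in_under [sgn B k]sgn_transversal // /sgn; have := aS k.
by case: ((k, true) \in S); case: ((k, false) \in S); case: ((k, true) \in B).
Qed.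

Lemma lin_sgn S B : admissible S -> transversal B ->
  lin (sgn S) B = #|S|%:Z - 2 * #|disagree S B|%:Z.
Proof.
move=> aS tB; rewrite card_admissible // !card_sumz mulr_sumr -sumrB.
by apply: eq_bigr => k _; rewrite sgn_mulE.
Qed.

Lemma lin_sgn_bounds S B : admissible S -> transversal B ->
  - #|S|%:Z <= lin (sgn S) B <= #|S|%:Z.
Proof.
move=> aS tB; rewrite lin_sgn //.
have : (#|disagree S B| <= #|S|)%N by rewrite card_admissible // subset_leq_card ?disagree_sub.
lia.
Qed.

Lemma disagree_eq0 S B : admissible S -> transversal B -> (disagree S B == set0) = (S \subset B).
Proof.
move=> /forallP aS tB; apply/eqP/subsetP => [d0 [k b] kS | sSB].
  have : k \notin disagree S B by rewrite d0 inE.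
  rewrite inE [sgn B k]sgn_transversal // /sgn; have := aS k.
  by case: b kS; rewrite ?tB; case: ((k, true) \in S); case: ((k, false) \in S);
    case: ((k, true) \in B).
apply/setP => k; rewrite !inE [sgn B k]sgn_transversal // /sgn; have := aS k.
have t1 : ((k, true) \in S) ==> ((k, true) \in B) by apply/implyP/sSB.
have t2 : ((k, false) \in S) ==> ((k, false) \in B) by apply/implyP/sSB.
move: t1 t2; rewrite tB.
by case: ((k, true) \in S); case: ((k, false) \in S); case: ((k, true) \in B).
Qed.

Lemma under_restr E B : transversal B -> under (restr E B) = E.
Proof.
move=> tB; apply/setP => k; rewrite in_under !in_restr tB.
by case: (k \in E); case: ((k, true) \in B).
Qed.

Lemma disagree_restr E S B : disagree (restr E S) B = disagree S B :&: E.
Proof.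
apply/setP => k; rewrite !inE sgn_restr.
by case: (k \in E); rewrite ?andbT ?andbF // mul0r eq_sym oppr_eq0.
Qed.

Lemma restr_eq_in E B C : transversal B -> transversal C ->
  {in E, forall k, sgn B k = sgn C k} -> restr E B = restr E C.
Proof.
move=> tB tC eBC; apply/setP => -[k b]; rewrite !in_restr.
by have [kE | //] := boolP (k \in E); rewrite (transversal_mem b tB tC (eBC k kE)).
Qed.

Lemma restr_under_subset I B : admissible I -> transversal B -> I \subset B ->
  restr (under I) B = I.
Proof.
move=> /forallP aI tB /subsetP sIB; apply/setP => -[k b]; rewrite in_restr in_under.
have t1 : ((k, true) \in I) ==> ((k, true) \in B) by apply/implyP/sIB.
have t2 : ((k, false) \in I) ==> ((k, false) \in B) by apply/implyP/sIB.
move: t1 t2 (aI k); rewrite tB; case: b; rewrite ?tB;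
by case: ((k, true) \in I); case: ((k, false) \in I); case: ((k, true) \in B).
Qed.

Lemma reorient_restr_disagree S B : admissible S -> transversal B ->
  reorient (restr (under S) B) (disagree S B) = S.
Proof.
move=> /forallP aS tB; apply/setP => -[k b].
rewrite in_reorient in_restr in_under inE [sgn B k]sgn_transversal // /sgn; have := aS k.
by case: b; case: ((k, true) \in S); case: ((k, false) \in S);
  case Bk: ((k, true) \in B); rewrite //= ?tB ?Bk.
Qed.

Lemma disagree_reorient I A B : admissible I -> transversal B -> I \subset B ->
  A \subset under I -> disagree (reorient I A) B = A.
Proof.
move=> aI tB sIB /subsetP sA; apply/setP => k; rewrite inE sgn_reorient.
have [kI | kI] := boolP (k \in under I); last first.
  by rewrite sgn_out // oppr0 if_same mul0r (negbTE (contra (sA k) kI)).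
rewrite -(restr_under_subset aI tB sIB) in kI *.
rewrite under_restr // in kI; rewrite sgn_restr kI [sgn B k]sgn_transversal //.
by case: (k \in A); case: ((k, true) \in B).
Qed.

Lemma reorient_disagree B C : transversal B -> transversal C -> reorient B (disagree B C) = C.
Proof.
move=> tB tC; apply/setP => -[k b]; rewrite in_reorient inE !sgn_transversal //.
by case: b; case Bk: ((k, true) \in B); case Ck: ((k, true) \in C);
  rewrite //= ?tB ?tC ?Bk ?Ck.
Qed.

Lemma disagree_self B : transversal B -> disagree B B = set0.
Proof. by move=> tB; apply/eqP; rewrite disagree_eq0 ?transversal_admissible. Qed.

Lemma disagree_eq_in S B C :
  {in under S, forall k, sgn B k = sgn C k} -> disagree S B = disagree S C.
Proof.
move=> eBC; apply/setP => k; rewrite !inE.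
by have [/eBC -> // | /sgn_out ->] := boolP (k \in under S); rewrite !mul0r.
Qed.

Lemma card_reorient X D : #|reorient X D| = #|X|.
Proof.
rewrite !card_signed; apply: eq_bigr => k _; rewrite !in_reorient.
by case: (k \in D); rewrite //= addnC.
Qed.

Lemma linD v w X : lin (fun k => v k + w k) X = lin v X + lin w X.
Proof. by rewrite /lin -big_split; apply: eq_bigr => k _; rewrite mulrDl. Qed.

Lemma linZ a w X : lin (fun k => a * w k) X = a * lin w X.
Proof. by rewrite /lin mulr_sumr; apply: eq_bigr => k _; rewrite mulrA. Qed.

Lemma lin_reorient w X D :
  lin w (reorient X D) = lin w X - 2 * \sum_(k in D) w k * sgn X k.
Proof.
rewrite /lin [\sum_(k in D) _]big_mkcond /= mulr_sumr -sumrB; apply: eq_bigr => k _.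
by rewrite sgn_reorient; case: (k \in D); rewrite ?mulr0 ?subr0 // mulrN; lia.
Qed.

Lemma lin_restr w E X : {in ~: E, forall k, w k = 0} -> lin w (restr E X) = lin w X.
Proof.
move=> w0; apply: eq_bigr => k _; rewrite sgn_restr.
by have [// | kE] := boolP (k \in E); rewrite w0 ?inE // !mul0r.
Qed.

Lemma proj_feasE (F' : {set {set signed n}}) E :
  proj_feas F' (~: E) = [set restr E B | B in F'].
Proof. by apply: eq_imset => B; apply/setP => a; rewrite !inE negbK andbC. Qed.

Lemma active_reorient (F' : {set {set signed n}}) I m j :
  admissible I -> active F' (under I) I m -> m \in under I -> j \in under I -> (j <= m)%N ->
  reorient I [set m; j] \notin F'.
Proof.
move=> aI /andP [ori act] mI jI jm.
have [-> | jm'] := eqVneq j m.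
  by rewrite setUid -symd_pairsets ?sub1set // -pairset1.
have jm2 : (j < m)%N by rewrite ltn_neqAle jm' jm.
have /implyP := forallP act j; rewrite jI => /(_ jm2).
by rewrite pairsetU symd_pairsets // subUset !sub1set mI jI.
Qed.

Lemma card_setI_lin S B : #|S :&: B|%:Z - #|setbar S :&: B|%:Z = lin (sgn S) B.
Proof.
rewrite !card_signed !(big_morph Posz PoszD (erefl 0%:Z)) -sumrB.
apply: eq_bigr => k _; rewrite !inE !in_setbar /sgn /=.
by case: ((k, true) \in S); case: ((k, false) \in S); case: ((k, true) \in B);
  case: ((k, false) \in B).
Qed.
End SignedSets.

Lemma parallel_ok_support n (v : 'I_n -> Rdefinitions.R) :
  parallel_ok v -> exists i j, forall k, k != i -> k != j -> v k = 0.
Proof.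
case=> i [c [vi | [j [_ [vij | vij]]]]]; [exists i, i | exists i, j | exists i, j];
  by move=> k ki kj; rewrite ?vi ?vij (negbTE ki) ?(negbTE kj) ?subrr ?addr0 ?subr0 mulr0.
Qed.

Lemma set2_restrict n (E : {set 'I_n}) (k l : 'I_n) :
  {in E, [set k; l] =i set0} \/
  exists m j, [/\ m \in E, j \in E, (j <= m)%N & {in E, [set k; l] =i [set m; j]}].
Proof.
have [kE | kE] := boolP (k \in E); have [lE | lE] := boolP (l \in E).
- right; have [lk | /ltnW kl] := leqP l k.
    by exists k, l; split.
  by exists l, k; split => // x _; rewrite !inE orbC.
- right; exists k, k; split => // x xE; rewrite !inE orbb.
  by case: (eqVneq x l) => [xl | _]; [rewrite xl (negbTE lE) in xE | rewrite orbF].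
- right; exists l, l; split => // x xE; rewrite !inE orbb.
  by case: (eqVneq x k) => [xk | _]; [rewrite xk (negbTE kE) in xE | ].
- left => x xE; rewrite !inE; apply/negbTE; rewrite negb_or.
  by apply/andP; split; apply: contraTneq xE => ->.
Qed.

Section DeltaMatroid.
Variables (n : nat) (F : {set {set signed n}}).
Hypothesis hD : is_delta_matroid F.
Implicit Types (X S B C I y : {set signed n}) (A D E : {set 'I_n}) (w : 'I_n -> int).

Lemma feasible_transversal B : B \in F -> transversal B.
Proof. by case: hD => _ hF _ /hF [aB cB]; exact: admissible_card_transversal. Qed.

Lemma exists_maximizer w : exists2 B, B \in F & forall C, C \in F -> lin w C <= lin w B.
Proof.
case: hD => /set0Pn [B0 B0F] _ _.
by case: (arg_maxP (fun B => lin w B) B0F) => B BF Bmax; exists B.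
Qed.

Lemma rankD_max S B : admissible S -> B \in F ->
  (forall C, C \in F -> lin (sgn S) C <= lin (sgn S) B) -> rankD F S = lin (sgn S) B.
Proof.
move=> aS BF Bmax; rewrite /rankD (eq_bigr _ (fun C _ => card_setI_lin S C)).
apply/le_anti/andP; split; last exact: (bigmax_sup B _ _ _ BF (lexx _)).
apply: bigmax_le => //.
by case/andP: (lin_sgn_bounds aS (feasible_transversal BF)).
Qed.

Lemma independentP I :
  reflect (admissible I /\ exists2 B, B \in F & I \subset B) (independent F I).
Proof.
apply: (iffP andP) => [[aI /eqP rI] | [aI [B BF sIB]]]; split => //.
  have [B BF Bmax] := exists_maximizer (sgn I); have tB := feasible_transversal BF.
  exists B => //; rewrite -disagree_eq0 // -cards_eq0; apply/eqP.
  by move: rI; rewrite (rankD_max aI BF Bmax) lin_sgn //; lia.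
have tB := feasible_transversal BF.
have dB : #|disagree I B| = 0%N by apply/eqP; rewrite cards_eq0 disagree_eq0.
have linB : lin (sgn I) B = #|I|%:Z by rewrite lin_sgn // dB mulr0 subr0.
apply/eqP; rewrite (rankD_max aI BF) // linB => C CF.
by case/andP: (lin_sgn_bounds aI (feasible_transversal CF)).
Qed.

(* The cross-multiplied form of: C maximises the gain per unit of Hamming distance
   (lin w C - lin w B) / d(B, C) over the feasible sets C != B, and has the least
   distance among such maximisers. *)
Definition steepest B w C : Prop :=
  (forall y, y \in F ->
    (lin w y - lin w B) * #|disagree B C|%:Z <= (lin w C - lin w B) * #|disagree B y|%:Z) /\
  (forall y, y \in F -> y != B ->
    (lin w y - lin w B) * #|disagree B C|%:Z = (lin w C - lin w B) * #|disagree B y|%:Z ->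
    (#|disagree B C| <= #|disagree B y|)%N).

Lemma is_edge_int B C (W : 'I_n -> int) : B \in F -> C \in F -> B != C ->
  (forall y, y \in F -> (forall z, z \in F -> lin W z <= lin W y) <-> y = B \/ y = C) ->
  is_edge F B C.
Proof.
move=> BF CF BC hW; split => //; exists (fun k => (W k)%:~R) => y yF.
have dotRE z : dotR (fun k => (W k)%:~R) z = (lin W z)%:~R.
  by rewrite /dotR /lin rmorph_sum; apply: eq_bigr => k _; rewrite rmorphM rmorphB.
rewrite -hW //; split=> ymax z zF.
  by rewrite -(ler_int Rdefinitions.R) -!dotRE; exact: ymax.
by rewrite !dotRE ler_int; exact: ymax.
Qed.

Lemma steepest_edge B C w : B \in F -> C \in F -> C != B -> steepest B w C ->
  is_edge F B C.
Proof.
move=> BF CF CB [cross tie]; have tB := feasible_transversal BF.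
set DC := disagree B C; pose ds := #|DC|%:Z; pose gs := lin w C - lin w B.
(* K exceeds the range of s, so lin W below compares (q, s) lexicographically. *)
pose B' := restr (~: DC) B; pose K := (2 * n + 1)%N%:Z.
pose q y := 2 * ds * lin w y + gs * lin (sgn B) y; pose s y := lin (sgn B') y.
have aB' : admissible B' by apply: admissible_subset (subsetIl _ _) (transversal_admissible tB).
have sE y : y \in F -> s y = #|B'|%:Z - 2 * #|disagree B y :\: DC|%:Z.
  by move=> yF; rewrite /s (lin_sgn aB' (feasible_transversal yF)) disagree_restr setDE.
have qE y : y \in F -> q y - q B = 2 * ((lin w y - lin w B) * ds - gs * #|disagree B y|%:Z).
  move=> yF; have aB := transversal_admissible tB; have ty := feasible_transversal yF.
  rewrite /q !(lin_sgn aB) // (disagree_self tB) cards0.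
  by rewrite /gs; lia.
pose W k := K * (2 * ds * w k + gs * sgn B k) + sgn B' k.
have WE y : lin W y = K * q y + s y by rewrite /W linD linZ linD !linZ.
have sB : s B = #|B'|%:Z by rewrite sE // (disagree_self tB) set0D cards0 mulr0 subr0.
have sC : s C = s B by rewrite sE // setDv cards0 mulr0 subr0.
have sle y : y \in F -> s y <= s B /\ s B - s y < K.
  move=> yF; rewrite sB sE //.
  have : (#|disagree B y :\: DC| <= n)%N by apply: leq_trans (max_card _) _; rewrite card_ord.
  by rewrite /K; lia.
have qle y : y \in F -> q y <= q B.
  by move=> yF; have := qE y yF; have := cross y yF; rewrite /ds /gs /DC; lia.
have qC : q C = q B by apply/eqP; rewrite -subr_eq0 qE // /ds /gs /DC; lia.
have maxE y : y \in F ->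
    (forall z, z \in F -> lin W z <= lin W y) <-> (q y = q B /\ s y = s B).
  move=> yF; have [sy sK] := sle y yF; split => [ymax | [qy sy'] z zF].
    by have := ymax B BF; rewrite !WE lex_ge ?qle // => /andP [/eqP -> /eqP ->].
  have [sz _] := sle z zF; rewrite !WE qy sy'.
  by apply: lerD => //; apply: ler_wpM2l; rewrite ?qle.
apply: (is_edge_int (W := W) BF CF); first by rewrite eq_sym.
move=> y yF; rewrite maxE //; split => [[qy sy] | [-> | ->]] //.
have [-> | yB] := eqVneq y B; [by left | right].
have sub : disagree B y \subset DC.
  by rewrite -setD_eq0 -cards_eq0; apply/eqP; move: sy; rewrite sE // sB; lia.
have dy : disagree B y = DC.
  apply/eqP; rewrite eqEcard sub /=; apply: tie => //.
  by move/eqP: qy; rewrite -subr_eq0 qE // /ds /gs /DC; lia.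
have tC := feasible_transversal CF.
by rewrite -(reorient_disagree tB (feasible_transversal yF)) dy (reorient_disagree tB tC).
Qed.

Lemma exists_steepest B w : B \in F -> (exists2 C, C \in F & lin w B < lin w C) ->
  exists2 C, C \in F & [/\ C != B, lin w B < lin w C & steepest B w C].
Proof.
move=> BF [C0 C0F lt0]; have tB := feasible_transversal BF.
pose P y := (y \in F) && (y != B).
have dpos y : P y -> (0 < #|disagree B y|%:Z).
  case/andP=> yF; apply: contraNT; rewrite ltz_nat -eqn0Ngt cards_eq0 => /eqP d0.
  by rewrite -(reorient_disagree tB (feasible_transversal yF)) d0 reorient_set0.
pose ratio y : rat := (lin w y - lin w B)%:~R / (#|disagree B y|%:Z)%:~R.
have ratio_le y z : P y -> P z -> (ratio y <= ratio z) =
    ((lin w y - lin w B) * #|disagree B z|%:Z <= (lin w z - lin w B) * #|disagree B y|%:Z).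
  by move=> Py Pz; rewrite ler_ratio ?dpos.
have PC0 : P C0 by rewrite /P C0F; apply: contraTneq lt0 => ->; rewrite ltxx.
have [C1 PC1 maxC1] := arg_maxP ratio PC0.
have TC1 : P C1 && (ratio C1 == ratio C1) by rewrite PC1 eqxx.
have [C /andP [/[dup] PC /andP [CF CB] /eqP rC] minC] :=
  @arg_minnP _ C1 (fun y => P y && (ratio y == ratio C1)) (fun y => #|disagree B y|) TC1.
have cross y : y \in F ->
    (lin w y - lin w B) * #|disagree B C|%:Z <= (lin w C - lin w B) * #|disagree B y|%:Z.
  move=> yF; have [-> | yB] := eqVneq y B.
    by rewrite disagree_self // cards0 subrr !mul0r mulr0.
  have Py : P y by rewrite /P yF.
  by rewrite -ratio_le // rC; apply: maxC1.
exists C => //; split => //.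
  have := cross C0 C0F; have := dpos C0 PC0; have := dpos C PC; nia.
split => // y yF yB e; have Py : P y by rewrite /P yF.
by apply: minC; rewrite Py -rC eq_le !ratio_le // e lexx.
Qed.

Lemma improving_neighbour B w : B \in F -> (exists2 C, C \in F & lin w B < lin w C) ->
  exists k l, reorient B [set k; l] \in F /\ lin w B < lin w (reorient B [set k; l]).
Proof.
move=> BF better; have [C CF [CB lt steep]] := exists_steepest BF better.
have tB := feasible_transversal BF; have tC := feasible_transversal CF.
have [_ _ /(_ B C (steepest_edge BF CF CB steep))] := hD.
case/parallel_ok_support => i [j supp].
have sub : disagree B C \subset [set i; j].
  apply/subsetP => k; rewrite inE; apply: contraLR; rewrite !inE negb_or => /andP [ki kj].
  have evecE X : evec X k = (sgn X k)%:~R by rewrite /evec rmorphB.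
  move/eqP: (supp k ki kj); rewrite !evecE -rmorphB intr_eq0 subr_eq0 => /eqP ->.
  by rewrite sgn_transversal //; case: ((k, true) \in C).
have [k [l kl]] : exists k l, disagree B C = [set k; l].
  apply: subset_set2 sub _; apply: contraNneq CB => d0.
  by rewrite -(reorient_disagree tB tC) d0 reorient_set0.
by exists k, l; rewrite -kl reorient_disagree.
Qed.

Lemma max_of_active_disagreements S B0 (c : 'I_n -> int) : admissible S -> B0 \in F ->
  {in disagree S B0, forall k,
    active (proj_feas F (~: under S)) (under S) (restr (under S) B0) k} ->
  (forall k, 0 < c k) -> {homo c : j k / (j <= k)%N >-> j <= k} ->
  forall B, B \in F -> lin (fun k => c k * sgn S k) B <= lin (fun k => c k * sgn S k) B0.
Proof.
move=> aS B0F act cpos cmon B BF; rewrite leNgt; apply/negP => better.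
set E := under S; set w := fun k => c k * sgn S k; set I := restr E B0.
have tB0 := feasible_transversal B0F.
have aI : admissible I by apply: admissible_subset (subsetIl _ _) (transversal_admissible tB0).
have uI : under I = E := under_restr E tB0.
have [k [l [CF gain]]] := improving_neighbour B0F (ex_intro2 _ _ B BF better).
have w0 : {in ~: E, forall x, w x = 0} by move=> x; rewrite inE /w => /sgn_out ->; rewrite mulr0.
have IF' : reorient I [set k; l] \in proj_feas F (~: E).
  by rewrite -restr_reorient proj_feasE; apply: imset_f.
have Igain : lin w I < lin w (reorient I [set k; l]) by rewrite -restr_reorient !lin_restr.
case: (set2_restrict E k l) => [out | [m [j [mE jE jm mj]]]].
  by move: Igain; rewrite (reorient_eq_in (D' := set0)) ?uI // reorient_set0 ltxx.
rewrite (reorient_eq_in (D' := [set m; j])) ?uI // in IF' Igain.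
have sgnI x : x \in E -> w x * sgn I x = c x * (1 - 2 * (x \in disagree S B0)%:Z).
  by move=> xE; rewrite /I sgn_restr xE /w -mulrA sgn_mulE // xE.
(* An improving pair {m, j}, j <= m, must flip a disagreement at m as c is nondecreasing. *)
have mD : m \in disagree S B0.
  move: Igain; rewrite lin_reorient big_set2 !sgnI //.
  have := cpos m; have := cpos j; have := cmon j m jm.
  by case: eqP; case: (m \in disagree S B0); case: (j \in disagree S B0); lia.
have actm := act m mD.
by apply/negP: IF'; apply: active_reorient; rewrite ?uI.
Qed.

(* Base 3: the digits sgn S k * (e_B k - e_C k) of the difference of two maximisers lie in
   {0, 2, -2}, so maximisers agree on the support of S (weight_max_unique). *)
Definition weight S (k : 'I_n) : int := (3 ^ k)%N%:Z * sgn S k.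

Definition opt S : {set signed n} :=
  odflt set0 [pick B in F | [forall C in F, lin (weight S) C <= lin (weight S) B]].

Definition base S := restr (under S) (opt S).

Definition flips S := disagree S (opt S).

Definition active_set I :=
  [set i in under I | active (proj_feas F (~: under I)) (under I) I i].

Lemma optP S : opt S \in F /\ forall C, C \in F -> lin (weight S) C <= lin (weight S) (opt S).
Proof.
rewrite /opt; case: pickP => [B /andP [BF /forall_inP Bmax] | none] //=.
have [B BF Bmax] := exists_maximizer (weight S).
by have := none B; rewrite BF /=; move/negbT/negP; case; apply/forall_inP.
Qed.

Lemma weight_max_unique S B C : admissible S -> transversal B -> transversal C ->
  lin (weight S) B = lin (weight S) C -> {in under S, forall k, sgn B k = sgn C k}.
Proof.
move=> /forallP aS tB tC eBC k kS.
pose d k := sgn S k * (sgn B k - sgn C k).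
have d0 : d k = 0.
  apply: (@digits_eq0 3) => [x|].
    by rewrite /d /sgn; do 6!case: (_ \in _).
  suff -> : \sum_(x < n) (3 ^ x)%N%:Z * d x = lin (weight S) B - lin (weight S) C.
    by rewrite eBC subrr.
  by rewrite /lin -sumrB; apply: eq_bigr => x _; rewrite /d /weight mulrA mulrBr.
move/eqP: d0; rewrite /d mulf_eq0 => /orP [/eqP sS0 |]; last by rewrite subr_eq0 => /eqP.
move: kS sS0; rewrite in_under /sgn; have := aS k.
by case: ((k, true) \in S); case: ((k, false) \in S).
Qed.

Lemma base_admissible S : admissible (base S).
Proof.
have [optF _] := optP S.
exact: admissible_subset (subsetIl _ _) (transversal_admissible (feasible_transversal optF)).
Qed.

Lemma under_base S : under (base S) = under S.
Proof. by have [optF _] := optP S; exact: under_restr (feasible_transversal optF). Qed.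

Lemma base_independent S : independent F (base S).
Proof.
have [optF _] := optP S.
by apply/independentP; split; [exact: base_admissible | exists (opt S); last exact: subsetIl].
Qed.

Lemma reorient_base_flips S : admissible S -> reorient (base S) (flips S) = S.
Proof.
have [optF _] := optP S.
by move=> aS; apply: reorient_restr_disagree aS (feasible_transversal optF).
Qed.

Lemma flips_active S : admissible S -> flips S \subset active_set (base S).
Proof.
move=> aS; have [optF optmax] := optP S; have topt := feasible_transversal optF.
set E := under S; set I := base S; have uI : under I = E := under_base S.
have aI : admissible I := base_admissible S.
have sgnI x : x \in E -> weight S x * sgn I x = (3 ^ x)%N%:Z * (1 - 2 * (x \in flips S)%:Z).
  by move=> xE; rewrite /I /base sgn_restr xE /weight -mulrA sgn_mulE // xE.
have gain D : D \subset E -> reorient I D \in proj_feas F (~: E) ->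
    0 <= \sum_(x in D) weight S x * sgn I x.
  move=> DE; rewrite proj_feasE => /imsetP [B BF eB].
  have w0 : {in ~: E, forall x, weight S x = 0}.
    by move=> x; rewrite inE /weight => /sgn_out ->; rewrite mulr0.
  have := optmax B BF; rewrite -(lin_restr _ w0) -eB lin_reorient /I /base lin_restr //.
  by lia.
apply/subsetP => k kF; have kE : k \in E := subsetP (disagree_sub S _) k kF.
rewrite inE uI kE /=; apply/andP; split.
  rewrite /orientable pairset1 symd_pairsets ?sub1set ?uI //; apply/negP => /gain.
  rewrite sub1set big_set1 sgnI // kF => /(_ kE) /=.
  have : (0 < 3 ^ k)%N by rewrite expn_gt0.
  lia.
apply/forallP => j; apply/implyP => /andP [jE jk].
rewrite pairsetU symd_pairsets ?subUset ?sub1set ?uI ?kE //; apply/negP => /gain.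
rewrite subUset !sub1set kE jE big_set2 !sgnI // kF => /(_ isT).
have : (3 ^ j < 3 ^ k)%N by rewrite ltn_exp2l.
by case: eqP => [jk' | _]; case: (j \in flips S); lia.
Qed.

Lemma opt_max_sgn S : admissible S ->
  forall C, C \in F -> lin (sgn S) C <= lin (sgn S) (opt S).
Proof.
move=> aS C CF; have [optF _] := optP S.
have act : {in disagree S (opt S), forall k,
    active (proj_feas F (~: under S)) (under S) (restr (under S) (opt S)) k}.
  by move=> k /(subsetP (flips_active aS)); rewrite inE under_base => /andP [].
have := max_of_active_disagreements (c := fun _ => 1) aS optF act (fun _ => ltr01)
  (fun _ _ _ => lexx 1) CF.
have lin1 X : lin (fun k => 1 * sgn S k) X = lin (sgn S) X.
  by apply: eq_bigr => k _; rewrite mul1r.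
by rewrite !lin1.
Qed.

Lemma rankD_flips S : admissible S -> rankD F S = #|S|%:Z - 2 * #|flips S|%:Z.
Proof.
move=> aS; have [optF _] := optP S.
by rewrite (rankD_max aS optF (opt_max_sgn aS)) (lin_sgn aS (feasible_transversal optF)).
Qed.

Lemma base_flips_reorient I A : independent F I -> A \subset active_set I ->
  base (reorient I A) = I /\ flips (reorient I A) = A.
Proof.
move=> /independentP [aI [B0 B0F sIB0]] sA; set S := reorient I A.
have tB0 := feasible_transversal B0F; have [optF optmax] := optP S.
have aS : admissible S := admissible_reorient A aI.
have uS : under S = under I := under_reorient I A.
have sAI : A \subset under I.
  by apply: subset_trans sA _; apply/subsetP => x; rewrite inE => /andP [].
have dA : disagree S B0 = A := disagree_reorient aI tB0 sIB0 sAI.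
have IE : restr (under S) B0 = I by rewrite uS restr_under_subset.
have act : {in disagree S B0, forall k,
    active (proj_feas F (~: under S)) (under S) (restr (under S) B0) k}.
  by move=> k; rewrite dA IE uS => /(subsetP sA); rewrite inE => /andP [].
have pos k : 0 < (3 ^ k)%N%:Z by rewrite ltz_nat expn_gt0.
have mon : {homo (fun k : 'I_n => (3 ^ k)%N%:Z) : j k / (j <= k)%N >-> j <= k}.
  by move=> j k jk; rewrite lez_nat leq_exp2l.
have B0max := max_of_active_disagreements aS B0F act pos mon.
have eqw : lin (weight S) B0 = lin (weight S) (opt S).
  by apply/le_anti; rewrite optmax // B0max.
have agree := weight_max_unique aS tB0 (feasible_transversal optF) eqw.
split; last by rewrite /flips -dA; apply/esym/disagree_eq_in.
by rewrite -IE /base; apply/esym/restr_eq_in => //; exact: feasible_transversal.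
Qed.

Lemma rankD_reorient I A : independent F I -> A \subset active_set I ->
  rankD F (reorient I A) = #|I|%:Z - 2 * #|A|%:Z.
Proof.
move=> iI sA; have [_ fA] := base_flips_reorient iI sA.
have aS : admissible (reorient I A) by apply: admissible_reorient; case/andP: iI.
by rewrite rankD_flips // fA card_reorient.
Qed.

Lemma reorient_bij (q : {set signed n} * {set 'I_n}) :
  admissible (reorient q.1 q.2) && ((base (reorient q.1 q.2), flips (reorient q.1 q.2)) == q) =
  independent F q.1 && (q.2 \subset active_set q.1).
Proof.
case: q => I A /=; apply/andP/andP => [[aS /eqP [eI eA]] | [iI sA]].
  have := flips_active aS; rewrite eA eI => ->.
  by have := base_independent (reorient I A); rewrite eI.
have [-> ->] := base_flips_reorient iI sA; rewrite eqxx; split => //.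
by apply: admissible_reorient; case/andP: iI.
Qed.
End DeltaMatroid.

Theorem theorem3p8 (n : nat) (F : {set {set signed n}}) (hD : is_delta_matroid F)
    (Rg : comNzRingType) (u v : Rg) :
  U_D F u (v - 1) =
  \sum_(I : {set signed n} | independent F I) u ^+ (n - #|I|) * v ^+ (activity F I).
Proof.
rewrite /U_D (reindex_onto (fun q => reorient q.1 q.2) (fun S => (base F S, flips F S))) /=;
  last by move=> S aS /=; rewrite reorient_base_flips.
under eq_bigl => q do rewrite reorient_bij //.
rewrite (eq_bigr (fun q : {set signed n} * {set 'I_n} =>
  u ^+ (n - #|q.1|) * (v - 1) ^+ #|q.2|)) => [|[I A] /andP [iI sA] /=]; last first.
  rewrite card_reorient (rankD_reorient hD iI sA).
  have -> : #|I|%:Z - (#|I|%:Z - 2 * #|A|%:Z) = (2 * #|A|)%N%:Z by lia.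
  by rewrite mulKn.
rewrite -(pair_big_dep (fun I => independent F I)
  (fun I (A : {set 'I_n}) => A \subset active_set F I)
  (fun I A => u ^+ (n - #|I|) * (v - 1) ^+ #|A|)) /=.
by apply: eq_bigr => I _; rewrite -mulr_sumr -exprD1_subsets subrK.
Qed.
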